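(* Let $P\subseteq\mathbb{R}^2$ be a convex polygon such that $\tau P=P^{\circ}$, and suppose there exist three consecutive vertices $u<v<w$ of $P$ in counterclockwise order such that the line $L_u$ contains both $v$ and $w$. Then $P$ has exactly $6$ vertices.
   Context: $\tau:\mathbb{R}^2\to\mathbb{R}^2$ denotes the $90^\circ$ counterclockwise rotation. The polar of $P$ is $P^{\circ}=\{x\in\mathbb{R}^2: y^\top x\le 1\text{ for all }y\in P\}$. For $u\in\mathbb{R}^2\setminus\{0\}$, $L_u=\{x\in\mathbb{R}^2:(\tau u)^\top x=1\}=\{x\in\mathbb{R}^2:\det(u,x)=1\}$. *)

From mathcomp Require Import all_boot all_order all_algebra.
From mathcomp Require Import reals.
Set Implicit Arguments. Unset Strict Implicit. Unset Printing Implicit Defensive.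
Import Order.TTheory GRing.Theory Num.Theory.
Local Open Scope ring_scope.

Section Plane.
Variable R : realType.
Definition pt := (R * R)%type.

Definition dotp (p q : pt) : R := p.1 * q.1 + p.2 * q.2.
Definition det2 (p q : pt) : R := p.1 * q.2 - p.2 * q.1.
Definition psub (p q : pt) : pt := (p.1 - q.1, p.2 - q.2).
Definition tau (p : pt) : pt := (- p.2, p.1).

Definition tau_img (P : pt -> Prop) : pt -> Prop :=
  fun x => exists y, P y /\ x = tau y.

Definition polar (P : pt -> Prop) : pt -> Prop :=
  fun x => forall y, P y -> dotp y x <= 1.

Definition Lline (u : pt) : pt -> Prop := fun x => dotp (tau u) x = 1.

Definition vtx (s : seq pt) (i : nat) : pt := nth (0, 0) s (i %% size s).

(* s lists the vertices of a convex polygon (with nonempty interior) in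
   counterclockwise order: every other vertex lies strictly to the left of
   each directed edge s_i -> s_{i+1}. *)
Definition ccw_convex_polygon (s : seq pt) : Prop :=
  (3 <= size s)%N /\
  forall i j : nat, (i < size s)%N -> (j < size s)%N ->
    j != i -> j != ((i + 1) %% size s)%N ->
    0 < det2 (psub (vtx s (i + 1)) (vtx s i)) (psub (vtx s j) (vtx s i)).

Definition conv_hull (s : seq pt) : pt -> Prop :=
  fun x => exists l : nat -> R,
    (forall i, (i < size s)%N -> 0 <= l i) /\
    \sum_(i < size s) l i = 1 /\
    x = (\sum_(i < size s) l i * (nth (0, 0) s i).1,
         \sum_(i < size s) l i * (nth (0, 0) s i).2).
End Plane.

From mathcomp Require Import all_boot all_order all_algebra.
From mathcomp Require Import reals.
From mathcomp Require Import ring lra.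
Import Order.TTheory GRing.Theory Num.Theory.
Local Open Scope ring_scope.

(* Write [a, b] for det2 a b. Since tau P = P°, each vertex v satisfies
   [v, x] <= 1 on P, and conversely every linear functional bounded by 1 on P
   is [y, _] for some y in P. This forces the origin inside P and, applied to
   the supporting line of an edge, puts every edge on L_v for some vertex v.
   If v_(i+1), v_(i+2) lie on L_(v_i), the vertex carrying the edge
   v_(i+2) v_(i+3) can only be v_(i+1): v_i would make v_(i+1), v_(i+2), v_(i+3)
   collinear, and any other vertex v would violate [v, v_(i+1)] <= 1. So the
   hypothesis propagates along the polygon, and three vertices pairwise at
   determinant 1 satisfy v_(i+2) = v_(i+1) - v_i, whence v_(i+3) = - v_i: the
   vertex sequence has exact period 6. *)

Section PlaneAlgebra.
Context {R : realType}.
Implicit Types a b c d u x y z : pt R.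

Lemma dotpC x y : dotp x y = dotp y x.
Proof. by rewrite /dotp mulrC [_ * y.2]mulrC. Qed.

Lemma dotp_tau u x : dotp (tau u) x = det2 u x.
Proof. by rewrite /dotp /det2 /=; ring. Qed.

Lemma LllineE u x : Lline u x = (det2 u x = 1).
Proof. by rewrite /Lline dotp_tau. Qed.

Lemma det2C x y : det2 x y = - det2 y x.
Proof. by rewrite /det2; ring. Qed.

Lemma Lline_collinear {a b c d} : det2 a b = 1 -> det2 a c = 1 -> det2 a d = 1 ->
  det2 (psub c b) (psub d b) = 0.
Proof.
move=> ab ac ad.
have E : det2 a b * det2 (psub c b) (psub d b) =
    (det2 a c - det2 a b) * det2 b d - (det2 a d - det2 a b) * det2 b c.
  by rewrite /det2 /psub /=; ring.
by rewrite ab ac ad subrr !mul0r subrr mul1r in E.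
Qed.

Lemma det2_gt1_left_of_edge {a b c z} :
  det2 a b = 1 -> det2 a c = 1 -> det2 z c = 1 -> det2 b c <= 1 ->
  0 < det2 (psub b a) (psub c a) -> 0 < det2 (psub b a) (psub z a) ->
  1 < det2 z b.
Proof.
move=> ab ac zc bc_le1.
have -> : det2 (psub b a) (psub c a) = det2 b c + det2 a b - det2 a c.
  by rewrite /det2 /psub /=; ring.
have plucker : det2 a c * det2 z b = det2 z c * det2 a b - det2 a z * det2 b c.
  by rewrite /det2; ring.
have E : det2 a c * det2 (psub b a) (psub z a) =
    (det2 b c - det2 a c) * det2 a z - det2 a b * (det2 z c - det2 a c).
  by rewrite /det2 /psub /=; ring.
rewrite ab ac zc !mul1r subrr subr0 in plucker E.
rewrite ab ac plucker E; nra.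
Qed.

Lemma det2_eq1_psub {a b c} : det2 a b = 1 -> det2 a c = 1 -> det2 b c = 1 ->
  c = psub b a.
Proof.
move=> ab ac bc.
have E1 : det2 a b * c.1 = det2 a c * b.1 - det2 b c * a.1 by rewrite /det2; ring.
have E2 : det2 a b * c.2 = det2 a c * b.2 - det2 b c * a.2 by rewrite /det2; ring.
rewrite ab ac bc !mul1r in E1 E2.
by rewrite [c]surjective_pairing E1 E2.
Qed.
End PlaneAlgebra.

Section ConvHull.
Context {R : realType} {s : seq (pt R)}.
Local Notation n := (size s).

Lemma vtx_ord (i : 'I_n) : vtx s i = nth (0, 0) s i.
Proof. by rewrite /vtx modn_small. Qed.

Lemma conv_hull_vtx k : (0 < n)%N -> conv_hull s (vtx s k).
Proof.
move=> n_gt0; pose j := Ordinal (ltn_pmod k n_gt0).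
have pick_j (F : 'I_n -> R) : \sum_(i < n) ((i : nat) == j)%:R * F i = F j.
  rewrite (bigD1 j) //= eqxx mul1r big1 ?addr0 // => i ij.
  by have /negbTE -> : (i : nat) != j := ij; rewrite mul0r.
exists (fun i : nat => (i == j)%:R); split; first by move=> i _; rewrite ler0n.
split.
  by rewrite -[RHS](pick_j (fun=> 1)); apply: eq_bigr => i _; rewrite mulr1.
by rewrite !pick_j /vtx -surjective_pairing.
Qed.

Lemma conv_hull_dotp_le w (M : R) y : conv_hull s y ->
  (forall k, (k < n)%N -> dotp w (vtx s k) <= M) -> dotp w y <= M.
Proof.
case=> l [l_ge0 [l_sum1 ->]] le_M.
have -> : dotp w (\sum_(i < n) l i * (nth (0, 0) s i).1,
                   \sum_(i < n) l i * (nth (0, 0) s i).2) =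
          \sum_(i < n) l i * dotp w (vtx s i).
  rewrite /dotp /= !mulr_sumr -big_split /=; apply: eq_bigr => i _.
  by rewrite vtx_ord /dotp; ring.
rewrite -[M]mul1r -l_sum1 mulr_suml; apply: ler_sum => i _.
by apply: ler_wpM2l; [exact: l_ge0 | exact: le_M].
Qed.

Lemma conv_hull_dotp_le_vtx w y : (0 < n)%N -> conv_hull s y ->
  exists2 k, (k < n)%N & dotp w y <= dotp w (vtx s k).
Proof.
move=> n_gt0 hy.
have [j _ j_max] :=
  @arg_maxP _ _ _ (Ordinal n_gt0) xpredT (fun i => dotp w (vtx s i)) isT.
exists j => //; apply: conv_hull_dotp_le => // k kn.
exact: (j_max (Ordinal kn)).
Qed.
End ConvHull.

Section SelfPolarPolygon.
Context {R : realType} {s : seq (pt R)}.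
Hypothesis s_convex : ccw_convex_polygon s.
Hypothesis tau_hull_polar :
  forall x, tau_img (conv_hull s) x <-> polar (conv_hull s) x.
Local Notation n := (size s).
Local Notation p := (vtx s).

Lemma size_ge3 : (3 <= n)%N. Proof. by case: s_convex. Qed.

Lemma size_gt0 : (0 < n)%N. Proof. exact: leq_trans _ size_ge3. Qed.

Lemma vtx_eq_mod {i j} : (i = j %[mod n])%N -> p i = p j.
Proof. by rewrite /vtx => ->. Qed.

Lemma vtx_mod i : p (i %% n) = p i.
Proof. exact/vtx_eq_mod/modn_mod. Qed.

Lemma addn_mod_neq i a b : (a < n)%N -> (b < n)%N -> a != b ->
  (i + a != i + b %[mod n])%N.
Proof. by move=> an bn ab; rewrite eqn_modDl !modn_small. Qed.

Lemma left_of_edge {i j} : (j != i %[mod n])%N -> (j != i + 1 %[mod n])%N ->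
  0 < det2 (psub (p (i + 1)) (p i)) (psub (p j) (p i)).
Proof.
move=> ji ji1; case: s_convex => _ /(_ (i %% n) (j %% n))%N.
rewrite !ltn_pmod ?size_gt0 // modnDml ji ji1 => /(_ isT isT isT isT).
by rewrite (vtx_eq_mod (modnDml i 1 n)) !vtx_mod.
Qed.

Lemma left_of_edge_ge0 i k : 0 <= det2 (psub (p (i + 1)) (p i)) (psub (p k) (p i)).
Proof.
have [/vtx_eq_mod ->|ki] := eqVneq (k %% n)%N (i %% n)%N.
  by rewrite /det2 /psub /= !subrr !mulr0 subrr.
have [/vtx_eq_mod ->|ki1] := eqVneq (k %% n)%N ((i + 1) %% n)%N.
  by rewrite /det2 /psub /= mulrC subrr.
exact/ltW/left_of_edge.
Qed.

Lemma left_of_edge2 i :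
  0 < det2 (psub (p (i + 1)) (p i)) (psub (p (i + 2)) (p i)).
Proof.
have n3 := size_ge3.
apply: left_of_edge; last by apply: addn_mod_neq => //; apply: leq_trans _ n3.
rewrite -[X in _ != X %[mod _]]addn0.
by apply: addn_mod_neq => //; apply: leq_trans _ n3.
Qed.

Lemma vtx_inj i j : p i = p j -> (i = j %[mod n])%N.
Proof.
move=> pij; apply/eqP/negP => /negP ij.
have [ji1|ji1] := eqVneq (i %% n)%N ((j + 1) %% n)%N.
  have := left_of_edge2 j; rewrite -(vtx_eq_mod ji1) pij.
  by rewrite /det2 /psub /= !subrr !mul0r subrr ltxx.
have := left_of_edge ij ji1; rewrite pij.
by rewrite /det2 /psub /= !subrr !mulr0 subrr ltxx.
Qed.

Lemma det2_vtx_le1 k {y} : conv_hull s y -> det2 (p k) y <= 1.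
Proof.
move=> hy; have : polar (conv_hull s) (tau (p k)).
  by apply/tau_hull_polar; exists (p k); split=> //; exact/conv_hull_vtx/size_gt0.
by move/(_ y hy); rewrite dotpC dotp_tau.
Qed.

Lemma det2_vtx_vtx_le1 k m : det2 (p k) (p m) <= 1.
Proof. exact/det2_vtx_le1/conv_hull_vtx/size_gt0. Qed.

Lemma tau_conv_hull_of_vtx_le1 w : (forall k, (k < n)%N -> dotp w (p k) <= 1) ->
  exists y, conv_hull s y /\ w = tau y.
Proof.
move=> w_le1; apply/tau_hull_polar => y hy.
by rewrite dotpC; exact: conv_hull_dotp_le hy w_le1.
Qed.

Lemma edge_det2_gt0 i : 0 < det2 (p i) (p (i + 1)).
Proof.
(* Otherwise P° contains the ray along the outer normal of edge i, which
   leaves tau P. *)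
rewrite ltNge; apply/negP => cd_le0.
set c := p i in cd_le0 *; set d := p (i + 1) in cd_le0 *; set e := psub d c.
have := left_of_edge2 i; rewrite -/c -/d -/e; set m := det2 e _ => m_gt0.
pose t := 2 / m; have t_gt0 : 0 < t by rewrite divr_gt0.
pose x : pt R := (t * e.2, - (t * e.1)).
have dotp_x z : dotp x z = t * (det2 c d - det2 e (psub z c)).
  by rewrite /dotp /det2 /psub /=; ring.
have [y [hy x_tau]] : exists y, conv_hull s y /\ x = tau y.
  apply: tau_conv_hull_of_vtx_le1 => k _; rewrite dotp_x.
  have := left_of_edge_ge0 i k; rewrite -/c -/d -/e; nra.
have := det2_vtx_le1 (i + 2) hy.
rewrite det2C -dotp_tau -x_tau dotp_x -/m mulrBr.
have -> : t * m = 2 by rewrite /t mulfVK ?gt_eqF.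
nra.
Qed.

Lemma edge_on_Lline_vtx i :
  exists k, det2 (p k) (p i) = 1 /\ det2 (p k) (p (i + 1)) = 1.
Proof.
set c := p i; set d := p (i + 1); set e := psub d c.
have D_gt0 : 0 < det2 c d := edge_det2_gt0 i; set D := det2 c d in D_gt0 *.
pose q : pt R := (e.2 / D, - e.1 / D).
have dotp_q z : dotp q z = det2 z e / D.
  by rewrite /dotp /det2 /q /=; field; rewrite gt_eqF.
have [y [hy q_tau]] : exists y, conv_hull s y /\ q = tau y.
  apply: tau_conv_hull_of_vtx_le1 => k _; rewrite dotp_q ler_pdivrMr // mul1r.
  have := left_of_edge_ge0 i k; rewrite -/c -/d -/e.
  have -> : det2 (p k) e = D - det2 e (psub (p k) c).
    by rewrite /D /e /det2 /psub /=; ring.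
  lra.
have det2_y z : det2 y z = det2 z e / D by rewrite -dotp_tau -q_tau dotp_q.
have [ce de] : det2 c e = D /\ det2 d e = D.
  by rewrite /D /e /det2 /psub /=; split; ring.
have yc : det2 y c = 1 by rewrite det2_y ce divff ?gt_eqF.
have yd : det2 y d = 1 by rewrite det2_y de divff ?gt_eqF.
pose w : pt R := (c.2 + d.2, - (c.1 + d.1)).
have dotp_w z : dotp w z = det2 z c + det2 z d by rewrite /dotp /det2 /=; ring.
have [k _] := conv_hull_dotp_le_vtx w y size_gt0 hy.
rewrite !dotp_w yc yd => kcd_ge2.
have := det2_vtx_vtx_le1 k i; have := det2_vtx_vtx_le1 k (i + 1).
by exists k; split; lra.
Qed.

Definition next_on_Lline j := Lline (p j) (p (j + 1)) /\ Lline (p j) (p (j + 2)).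

Lemma next_on_Lline_succ {i} : next_on_Lline i -> next_on_Lline (i + 1).
Proof.
rewrite /next_on_Lline !LllineE => -[ab ac].
have [k [kc kd]] := edge_on_Lline_vtx (i + 2).
have abc := left_of_edge2 i; have bcd := left_of_edge2 (i + 1).
rewrite !addn1 !addn2 in ab ac kc kd abc bcd *.
have [/vtx_eq_mod ki|ki] := eqVneq (k %% n)%N (i %% n)%N.
  by rewrite ki in kd; rewrite (Lline_collinear ab ac kd) ltxx in bcd.
have [/vtx_eq_mod ki1|ki1] := eqVneq (k %% n)%N ((i + 1) %% n)%N.
  by rewrite ki1 addn1 in kc kd.
have := left_of_edge ki ki1; rewrite addn1 => abk.
have := det2_gt1_left_of_edge ab ac kc (det2_vtx_vtx_le1 _ _) abc abk.
by rewrite ltNge det2_vtx_vtx_le1.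
Qed.

Lemma next_on_Lline_add {i} k : next_on_Lline i -> next_on_Lline (i + k).
Proof.
move=> Li; elim: k => [|k IHk]; first by rewrite addn0.
by rewrite addnS -addn1; exact: next_on_Lline_succ.
Qed.

Lemma vtx_recurrence {i} : next_on_Lline i -> p (i + 2) = psub (p (i + 1)) (p i).
Proof.
move=> Li; have [bc _] := next_on_Lline_succ Li; move: Li bc.
rewrite /next_on_Lline !LllineE !addn1 !addn2 => -[ab ac] bc.
exact: det2_eq1_psub ab ac bc.
Qed.

Lemma vtx_add3 {i} : next_on_Lline i -> p (i + 3) = (- (p i).1, - (p i).2).
Proof.
move=> Li; have rec0 := vtx_recurrence Li.
have rec1 := vtx_recurrence (next_on_Lline_succ Li).
rewrite !addn1 !addn2 in rec0 rec1; rewrite addn3 rec1 rec0.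
by rewrite /psub /=; congr pair; ring.
Qed.

Lemma vtx_period {i} : next_on_Lline i -> p (i + 6) = p i /\ p (i + 3) <> p i.
Proof.
move=> Li; split.
  rewrite -[(i + 6)%N]/(i + (3 + 3))%N addnA.
  rewrite (vtx_add3 (next_on_Lline_add 3 Li)) (vtx_add3 Li) /=.
  by rewrite !opprK -surjective_pairing.
rewrite vtx_add3 // => pi_opp.
have [+ _] := Li; rewrite LllineE; move: pi_opp.
by case: (p i) => a b [oppa oppb]; rewrite /det2 /=; nra.
Qed.
End SelfPolarPolygon.

Theorem proposition6 (R : realType) (s : seq (pt R)) :
  ccw_convex_polygon s ->
  (forall x, tau_img (conv_hull s) x <-> polar (conv_hull s) x) ->
  (exists i : nat, (i < size s)%N /\
     Lline (vtx s i) (vtx s (i + 1)) /\ Lline (vtx s i) (vtx s (i + 2))) ->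
  size s = 6%N.
Proof.
move=> s_convex tau_hull_polar [i [_ Li]].
have [p6 p3] := vtx_period s_convex tau_hull_polar Li.
have /eqP n_dvd6 : (6 == 0 %[mod size s])%N.
  by rewrite -(eqn_modDl i) addn0; apply/eqP/(vtx_inj s_convex).
have n_ndvd3 : (3 != 0 %[mod size s])%N.
  by rewrite -(eqn_modDl i) addn0; apply: contra_notN p3 => /eqP/vtx_eq_mod.
have := size_ge3 s_convex.
by case: (size s) n_dvd6 n_ndvd3 => [|[|[|[|[|[|[|m]]]]]]].
Qed.
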